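(* Let $(X,\tau,\mathcal{I})$ be an ideal topological space such that $(X,\tau)$ is semi-Alexandroff, $(X,\tau,\mathcal{I})$ is a $T_{\mathcal{I}}$-space, and $\mathcal{I}$ is a $\tau$-boundary. If $(X,\tau)$ is resolvable, then $(X,\tau,\mathcal{I})$ is $\mathcal{I}$-resolvable.
   Context: An ideal on a topological space $(X,\tau)$ is a nonempty collection $\mathcal{I}$ of subsets of $X$ closed under taking subsets and finite unions. $(X,\tau,\mathcal{I})$ is a $T_{\mathcal{I}}$-space if for every $I\in\mathcal{I}$ and every $x\in X\setminus I$ there is a set $A_x$ with $x\in A_x$, $A_x\cap I=\emptyset$, and $A_x$ open or closed. A set is semi-open if it lies between an open set and that open set's closure; $(X,\tau)$ is semi-Alexandroff if every intersection of open sets is semi-open. $\mathcal{I}$ is a $\tau$-boundary if $\tau\cap\mathcal{I}=\{\emptyset\}$. For $A\subseteq X$, the local function is $A^*=\{x\in X: U\cap A\notin\mathcal{I}\text{ for every open }U\ni x\}$; $A$ is $\mathcal{I}$-dense if $A^*=X$. A nonempty space is resolvable if $X$ is the disjoint union of two dense subsets, and $(X,\tau,\mathcal{I})$ is $\mathcal{I}$-resolvable if $X$ is the disjoint union of two $\mathcal{I}$-dense subsets. *)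

From mathcomp Require Import all_boot all_order.
From mathcomp Require Import boolp classical_sets topology.
Set Implicit Arguments. Unset Strict Implicit. Unset Printing Implicit Defensive.
Local Open Scope classical_set_scope.

Section IdealTop.
Context {X : topologicalType}.

Definition is_ideal (I : set (set X)) : Prop :=
  [/\ I !=set0,
      (forall A B, B `<=` A -> I A -> I B) &
      (forall A B, I A -> I B -> I (A `|` B))].

Definition semi_open (A : set X) : Prop :=
  exists U, [/\ open U, U `<=` A & A `<=` closure U].

Definition semi_Alexandroff : Prop :=
  forall F : set (set X), (forall U, F U -> open U) ->
    semi_open (\bigcap_(U in F) U).

Definition T_I_space (I : set (set X)) : Prop :=
  forall J, I J -> forall x, ~ J x ->
    exists A, [/\ A x, A `&` J = set0 & (open A \/ closed A)].

Definition tau_boundary (I : set (set X)) : Prop :=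
  [set U | open U /\ I U] = [set set0].

Definition local_fun (I : set (set X)) (A : set X) : set X :=
  [set x | forall U, open U -> U x -> ~ I (U `&` A)].

Definition I_dense (I : set (set X)) (A : set X) : Prop :=
  local_fun I A = setT.

Definition resolvable : Prop :=
  [set: X] !=set0 /\
  exists A B : set X, [/\ A `&` B = set0, A `|` B = setT, dense A & dense B].

Definition I_resolvable (I : set (set X)) : Prop :=
  exists A B : set X,
    [/\ A `&` B = set0, A `|` B = setT, I_dense I A & I_dense I B].

End IdealTop.

From mathcomp Require Import all_boot all_order.
From mathcomp Require Import boolp classical_sets topology.
Set Implicit Arguments.
Unset Strict Implicit.
Unset Printing Implicit Defensive.

Local Open Scope classical_set_scope.

(* Every dense set A is I-dense.  Suppose V is open and J := V ∩ A ∈ I, and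
   let K be the kernel of J (the intersection of the open sets containing J).
   Points of K lie in V, hence in the closure of J.  A point y ∉ J is
   separated from J by a T_I set B: if B is open, y ∉ closure J; if B is
   closed, ~B is an open superset of J, so y ∉ K.  Hence K ⊆ J, so K ∈ I.
   Being semi-open, K contains an open U with K ⊆ closure U; as U ∈ I is
   open it is empty, so J ⊆ K = ∅, contradicting the density of A. *)

Section IdealResolvability.
Variables (X : topologicalType) (I : set (set X)).

Definition kernel (J : set X) : set X :=
  \bigcap_(U in [set U | open U /\ J `<=` U]) U.

Lemma sub_kernel (J : set X) : J `<=` kernel J.
Proof. by move=> x Jx U [_ JU]; exact: JU. Qed.

Lemma kernel_sub_open (J U : set X) : open U -> J `<=` U -> kernel J `<=` U.
Proof. by move=> oU JU x; apply. Qed.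

Lemma semi_open_kernel (J : set X) :
  semi_Alexandroff (X:=X) -> semi_open (kernel J).
Proof. by move=> hSA; apply: hSA => U []. Qed.

Lemma dense_open_sub_closureI (A V : set X) :
  dense A -> open V -> V `<=` closure (V `&` A).
Proof.
move=> dA oV x Vx W; rewrite nbhsE => -[B [oB Bx] BW].
have [y [[Vy By] Ay]] : (V `&` B) `&` A !=set0.
  by apply: dA; [exists x | exact: openI].
by exists y; split; [split | exact: BW].
Qed.

Lemma T_I_kernel_closure (J : set X) :
  T_I_space I -> I J -> kernel J `&` closure J `<=` J.
Proof.
move=> hTI IJ y [Ky clJy]; apply: contrapT => nJy.
have [B [By BJ0 [oB|cB]]] := hTI J IJ y nJy.
- have [z [Jz Bz]] := clJy B (open_nbhs_nbhs (conj oB By)).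
  by have : (B `&` J) z by []; rewrite BJ0.
- have JBC : J `<=` ~` B.
    by move=> z Jz Bz; have : (B `&` J) z by []; rewrite BJ0.
  exact: (kernel_sub_open (closed_openC cB) JBC Ky By).
Qed.

Lemma semi_open_ideal_eq0 (K : set X) :
  is_ideal I -> tau_boundary I -> semi_open K -> I K -> K = set0.
Proof.
move=> [_ Isub _] htb [U [oU UK KclU]] IK.
have U0 : U = set0.
  have : [set U | open U /\ I U] U by split => //; exact: Isub IK.
  by rewrite htb.
by apply/seteqP; split => //; rewrite -closure0 -U0.
Qed.

Lemma dense_I_dense (A : set X) :
  is_ideal I -> semi_Alexandroff (X:=X) -> T_I_space I -> tau_boundary I ->
  dense A -> I_dense I A.
Proof.
move=> hI hSA hTI htb dA; apply/seteqP; split => // x _ V oV Vx IJ.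
have KJ : kernel (V `&` A) `<=` V `&` A.
  move=> y Ky; apply: (T_I_kernel_closure hTI IJ); split => //.
  apply: (dense_open_sub_closureI dA oV).
  exact: (kernel_sub_open oV (@subIsetl _ V A) Ky).
have K0 : kernel (V `&` A) = set0.
  apply: semi_open_ideal_eq0 => //; first exact: semi_open_kernel.
  by case: hI => _ Isub _; exact: Isub IJ.
have [y Jy] : V `&` A !=set0 by apply: dA; [exists x|].
have : kernel (V `&` A) y by exact: sub_kernel.
by rewrite K0.
Qed.

End IdealResolvability.

Theorem mainTheorem2 (X : topologicalType) (I : set (set X)) :
  is_ideal I -> semi_Alexandroff (X:=X) -> T_I_space I -> tau_boundary I ->
  resolvable (X:=X) -> I_resolvable I.
Proof.
move=> hI hSA hTI htb [_ [A [B [AB0 ABT dA dB]]]].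
by exists A, B; split => //; exact: dense_I_dense.
Qed.
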